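(* Let $F$ be an infinite field of prime characteristic $p$, and let $q,k$ be positive integers and $n\geqslant qk$. Let $E_n$ be the natural $n$-dimensional module for $\mathrm{GL}_n(F)$ with standard basis $e_1,\dots,e_n$. Then the $\omega_{qk}$-weight space of the $F\mathrm{GL}_n(F)$-module $L^k(E_n^{\otimes q})$ has dimension $$\dim f_{qk}\bigl(L^k(E_n^{\otimes q})\bigr) = \frac{(qk)!}{k}.$$
   Context: All tensor products are over $F$, and $\mathrm{GL}_n(F)$ acts diagonally on tensor powers. For an $F$-vector space (module) $W$, $L^k(W)$ denotes the $k$th Lie power: the intersection with $W^{\otimes k}$ of the Lie subalgebra of the tensor algebra $T(W)$ (bracket $[x,y]=x\otimes y-y\otimes x$) generated by $W$. Here $W=E_n^{\otimes q}$, so $L^k(E_n^{\otimes q})$ is a $\mathrm{GL}_n(F)$-submodule of $E_n^{\otimes qk}$. For $t_1,\dots,t_n\in F^\times$ let $d(t_1,\dots,t_n)$ be the diagonal matrix with these entries. For a polynomial $\mathrm{GL}_n(F)$-module $M$ homogeneous of degree $r$ and $\alpha=(\alpha_1,\dots,\alpha_n)$ a tuple of non-negative integers summing to $r$, the weight space is $M^\alpha=\{u\in M : u\cdot d(t_1,\dots,t_n)=t_1^{\alpha_1}\cdots t_n^{\alpha_n}u \ \forall t_i\in F^\times\}$. For $r\le n$, $\omega_r=(1,\dots,1,0,\dots,0)$ with $r$ ones, and the Schur functor is $f_r(M)=M^{\omega_r}$. *)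

From mathcomp Require Import all_boot all_order all_algebra.
Set Implicit Arguments. Unset Strict Implicit. Unset Printing Implicit Defensive.
Import GRing.Theory.
Local Open Scope ring_scope.

(* The (completed) tensor algebra T(E_n) over F: a tensor is a function from
   words (sequences of basis indices of E_n) to coefficients; the word
   [:: i_1; ...; i_m] stands for e_{i_1} (x) ... (x) e_{i_m}.  Homogeneous
   elements of degree m (elements of E_n^{(x) m}) are functions supported on
   words of length m. *)
Definition tensor (F : fieldType) (n : nat) := seq 'I_n -> F.

Definition homog (F : fieldType) (n m : nat) (u : tensor F n) : Prop :=
  forall w : seq 'I_n, size w != m -> u w = 0.

(* Product of the tensor algebra (concatenation of words). *)
Definition tmul (F : fieldType) (n : nat) (u v : tensor F n) : tensor F n :=
  fun w => \sum_(i < (size w).+1) u (take i w) * v (drop i w).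

Definition tbracket (F : fieldType) (n : nat) (u v : tensor F n) : tensor F n :=
  fun w => tmul u v w - tmul v u w.

Inductive inLieGen (F : fieldType) (n q : nat) : tensor F n -> Prop :=
| LG_gen u : @homog F n q u -> @inLieGen F n q u
| LG_add u v : @inLieGen F n q u -> @inLieGen F n q v ->
    @inLieGen F n q (fun w => u w + v w)
| LG_scale (c : F) u : @inLieGen F n q u -> @inLieGen F n q (fun w => c * u w)
| LG_bracket u v : @inLieGen F n q u -> @inLieGen F n q v ->
    @inLieGen F n q (tbracket u v).

(* The Lie power L^k(E_n^{(x) q}) = (Lie subalgebra generated by W) /\ W^{(x) k},
   with W^{(x) k} = E_n^{(x) qk}. *)
Definition LiePower (F : fieldType) (n q k : nat) (u : tensor F n) : Prop :=
  @inLieGen F n q u /\ @homog F n (q * k) u.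

(* Right action of the diagonal matrix d(t_1,...,t_n) on tensors:
   e_{i_1} (x) ... (x) e_{i_m} . d(t) = t_{i_1} ... t_{i_m} e_{i_1} (x) ... *)
Definition diag_act (F : fieldType) (n : nat) (t : 'I_n -> F) (u : tensor F n)
  : tensor F n := fun w => (\prod_(a <- w) t a) * u w.

Definition weight_space (F : fieldType) (n : nat) (M : tensor F n -> Prop)
  (alpha : 'I_n -> nat) (u : tensor F n) : Prop :=
  M u /\ forall t : 'I_n -> F, (forall i, t i != 0) ->
    forall w, diag_act t u w = (\prod_(i < n) t i ^+ alpha i) * u w.

Definition omega (n r : nat) : 'I_n -> nat := fun i => (i < r)%N.

Definition schur_functor (F : fieldType) (n r : nat) (M : tensor F n -> Prop)
  : tensor F n -> Prop := weight_space M (@omega n r).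

Definition lincomb (F : fieldType) (n d : nat) (c : 'I_d -> F)
  (b : 'I_d -> tensor F n) : tensor F n :=
  fun w => \sum_(i < d) c i * b i w.

Definition has_dim (F : fieldType) (n : nat) (P : tensor F n -> Prop) (d : nat)
  : Prop :=
  exists b : 'I_d -> tensor F n,
    (forall i, P (b i)) /\
    (forall c : 'I_d -> F, (forall w, lincomb c b w = 0) -> forall i, c i = 0) /\
    (forall u, P u -> exists c : 'I_d -> F, forall w, u w = lincomb c b w).

Definition infinite_field (F : fieldType) : Prop :=
  forall s : seq F, exists x : F, x \notin s.

(* The Lie subalgebra generated by W = E_n^{(x) q} is spanned by iterated
   brackets of pure tensors e_w with |w| = q.  Over an infinite field a vector
   of weight omega_{qk} is supported on the rearrangements of the word
   1 2 ... qk, so it is spanned by the brackets whose leaves concatenate to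
   such a rearrangement.  By the Jacobi identity each of these is a combination
   of left-normed brackets [..[e_a, e_{c_1}], ..., e_{c_{k-1}}] whose first leaf
   a contains the letter 1.  On words having 1 among their first q letters such
   a bracket is the indicator of the word a c_1 ... c_{k-1}, so these brackets
   are linearly independent.  They are determined by the position of 1 among
   the first q places and an arrangement of the other qk - 1 letters, which
   gives q (qk - 1)! = (qk)!/k of them. *)

From mathcomp Require Import all_boot all_order all_algebra all_fingroup.
From mathcomp Require Import ring.
From Stdlib Require Import FunctionalExtensionality.
Set Implicit Arguments. Unset Strict Implicit. Unset Printing Implicit Defensive.
Import GRing.Theory.
Local Open Scope ring_scope.

Section TensorAlgebra.
Variables (F : fieldType) (n : nat).
Local Notation tens := (tensor F n).
Implicit Types (f g h : tens) (x : F) (w : seq 'I_n).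

Definition delta w : tens := fun v => (v == w)%:R.

Lemma tmul_nil f g : tmul f g [::] = f [::] * g [::].
Proof. by rewrite /tmul big_ord_recl big_ord0 addr0. Qed.

Lemma tmul_cons f g a w :
  tmul f g (a :: w) = f [::] * g (a :: w) + tmul (fun v => f (a :: v)) g w.
Proof. by rewrite /tmul /= big_ord_recl. Qed.

Lemma tmulDl f g h : tmul (f \+ g) h = tmul f h \+ tmul g h.
Proof.
apply: functional_extensionality => w; rewrite /tmul /= -big_split.
by apply: eq_bigr => i _; rewrite mulrDl.
Qed.

Lemma tmulDr f g h : tmul h (f \+ g) = tmul h f \+ tmul h g.
Proof.
apply: functional_extensionality => w; rewrite /tmul /= -big_split.
by apply: eq_bigr => i _; rewrite mulrDr.
Qed.

Lemma tmulZl x f h : tmul (x \*o f) h = x \*o tmul f h.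
Proof.
apply: functional_extensionality => w; rewrite /tmul /= mulr_sumr.
by apply: eq_bigr => i _; rewrite mulrA.
Qed.

Lemma tmulZr x f h : tmul h (x \*o f) = x \*o tmul h f.
Proof.
apply: functional_extensionality => w; rewrite /tmul /= mulr_sumr.
by apply: eq_bigr => i _; rewrite mulrCA.
Qed.

Lemma tmul0l h : tmul \0 h = \0.
Proof.
by apply: functional_extensionality => w; rewrite /tmul big1 // => i _; rewrite mul0r.
Qed.

Lemma tmul0r h : tmul h \0 = \0.
Proof.
by apply: functional_extensionality => w; rewrite /tmul big1 // => i _; rewrite mulr0.
Qed.

Lemma tmulA f g h : tmul (tmul f g) h = tmul f (tmul g h).
Proof.
apply: functional_extensionality => w; elim: w f => [|a w IH] f.
  by rewrite !tmul_nil mulrA.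
rewrite !tmul_cons !tmul_nil.
have -> : (fun v => tmul f g (a :: v)) =
    (f [::] \*o (fun v => g (a :: v))) \+ tmul (fun v => f (a :: v)) g.
  by apply: functional_extensionality => v; rewrite tmul_cons.
rewrite tmulDl tmulZl /= IH; ring.
Qed.

Lemma tmul_delta u v : tmul (delta u) (delta v) = delta (u ++ v).
Proof.
apply: functional_extensionality => w; elim: w u => [|a w IH] [|b u].
- by rewrite tmul_nil /delta; case: v => /=; rewrite ?mul1r ?mulr0.
- by rewrite tmul_nil /delta /= mul0r.
- rewrite tmul_cons.
  have -> : (fun s => delta [::] (a :: s)) = \0 by apply: functional_extensionality.
  by rewrite tmul0l /delta /= addr0 mul1r.
- rewrite tmul_cons.
  have -> : (fun s => delta (b :: u) (a :: s)) = (a == b)%:R \*o delta u.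
    apply: functional_extensionality => s; rewrite /delta /= eqseq_cons.
    by case: (a == b); rewrite ?mul1r ?mul0r.
  rewrite tmulZl /= IH /delta /= mul0r add0r eqseq_cons.
  by case: (a == b); rewrite ?mul1r ?mul0r.
Qed.

Lemma tmul_neq0 f g w : tmul f g w != 0 ->
  exists i, f (take i w) != 0 /\ g (drop i w) != 0.
Proof.
move=> fg; have : ~~ [forall i : 'I_(size w).+1, f (take i w) * g (drop i w) == 0].
  by apply: contra fg => /forallP fg0; apply/eqP; rewrite /tmul big1 // => i _; apply/eqP.
by case/forallPn => i; rewrite mulf_eq0 negb_or => /andP[]; exists i.
Qed.

Lemma tbracketE f g : tbracket f g = tmul f g \+ (-1) \*o tmul g f.
Proof. by apply: functional_extensionality => w; rewrite /tbracket /= mulN1r. Qed.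

Lemma tbracketC f g : tbracket g f = (-1) \*o tbracket f g.
Proof. by apply: functional_extensionality => w; rewrite /tbracket /=; ring. Qed.

Lemma jacobi f g h : tbracket f (tbracket g h) =
  tbracket (tbracket f g) h \+ (-1) \*o tbracket (tbracket f h) g.
Proof.
rewrite !tbracketE !(tmulDl, tmulDr, tmulZl, tmulZr) !tmulA.
by apply: functional_extensionality => w /=; ring.
Qed.

Definition tlinear (phi : tens -> tens) := [/\ phi \0 = \0,
  forall f g, phi (f \+ g) = phi f \+ phi g & forall x f, phi (x \*o f) = x \*o phi f].

Lemma tbracketl_linear h : tlinear (fun f => tbracket f h).
Proof.
split=> [|f g|x f]; rewrite !tbracketE ?tmul0l ?tmul0r ?tmulDl ?tmulDr ?tmulZl ?tmulZr;
  by apply: functional_extensionality => w /=; ring.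
Qed.

Inductive tspan (P : tens -> Prop) : tens -> Prop :=
| tspan_gen f : P f -> tspan P f
| tspan0 : tspan P \0
| tspanD f g : tspan P f -> tspan P g -> tspan P (f \+ g)
| tspanZ x f : tspan P f -> tspan P (x \*o f).

Lemma tspan_linear (phi : tens -> tens) (P Q : tens -> Prop) f :
  tlinear phi -> (forall g, P g -> tspan Q (phi g)) -> tspan P f -> tspan Q (phi f).
Proof.
case=> phi0 phiD phiZ PQ; elim=> [g /PQ //||g g' _ ? _ ?|x g _ ?].
- by rewrite phi0; apply: tspan0.
- by rewrite phiD; apply: tspanD.
- by rewrite phiZ; apply: tspanZ.
Qed.

Lemma tspan_trans (P Q : tens -> Prop) f :
  (forall g, P g -> tspan Q g) -> tspan P f -> tspan Q f.
Proof. exact: (@tspan_linear id). Qed.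

Lemma tspan_sub (P Q : tens -> Prop) f :
  (forall g, P g -> Q g) -> tspan P f -> tspan Q f.
Proof. by move=> PQ; apply: tspan_trans => g /PQ; apply: tspan_gen. Qed.

Lemma tspan_sum (P : tens -> Prop) (I : Type) (s : seq I) (c : I -> F) (g : I -> tens) :
  (forall i, P (g i)) -> tspan P (fun w => \sum_(i <- s) c i * g i w).
Proof.
move=> Pg; elim: s => [|i s IH].
  have -> : (fun w => \sum_(i <- [::]) c i * g i w) = \0.
    by apply: functional_extensionality => w; rewrite big_nil.
  exact: tspan0.
have -> : (fun w => \sum_(j <- i :: s) c j * g j w) =
    c i \*o g i \+ (fun w => \sum_(j <- s) c j * g j w).
  by apply: functional_extensionality => w; rewrite big_cons.
by apply: tspanD => //; apply/tspanZ/tspan_gen.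
Qed.

Lemma tspan_lincomb d (b : 'I_d -> tens) u :
  tspan (fun g => exists i, g = b i) u -> exists c, forall w, u w = lincomb c b w.
Proof.
elim=> [_ [i ->]||f g _ [c1 E1] _ [c2 E2]|x f _ [c E]].
- exists (fun j => (j == i)%:R) => w; rewrite /lincomb (bigD1 i) //= eqxx mul1r.
  by rewrite big1 ?addr0 // => j /negbTE ->; rewrite mul0r.
- by exists (fun _ => 0) => w; rewrite /lincomb big1 // => i _; rewrite mul0r.
- exists (fun j => c1 j + c2 j) => w; rewrite /= E1 E2 /lincomb -big_split.
  by apply: eq_bigr => j _; rewrite mulrDl.
- exists (fun j => x * c j) => w; rewrite /= E /lincomb mulr_sumr.
  by apply: eq_bigr => j _; rewrite mulrA.
Qed.

Inductive btree := Leaf of seq 'I_n | Node of btree & btree.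

Fixpoint beval (t : btree) : tens :=
  match t with
  | Leaf w => delta w
  | Node t1 t2 => tbracket (beval t1) (beval t2)
  end.

Fixpoint leaves (t : btree) : seq (seq 'I_n) :=
  match t with
  | Leaf w => [:: w]
  | Node t1 t2 => leaves t1 ++ leaves t2
  end.

Definition lie_monomial q (g : tens) :=
  exists2 t, all (fun w => size w == q) (leaves t) & g = beval t.

Lemma beval_support t w : beval t w != 0 -> perm_eq w (flatten (leaves t)).
Proof.
elim: t w => [u|t1 IH1 t2 IH2] w /=.
  rewrite cats0 /delta /=; case: (w =P u) => [-> _|_]; last by rewrite eqxx.
  exact: perm_refl.
rewrite flatten_cat => H.
have : (tmul (beval t1) (beval t2) w != 0) || (tmul (beval t2) (beval t1) w != 0).
  apply: contraR H; rewrite negb_or !negbK /tbracket.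
  by case/andP => /eqP -> /eqP ->; rewrite subrr.
case/orP => /tmul_neq0 [i [h1 h2]]; rewrite -(cat_take_drop i w).
  by apply: perm_cat; [apply: IH1 | apply: IH2].
by rewrite perm_catC perm_cat ?IH1 ?IH2.
Qed.

Lemma lie_monomial_inLieGen q g : lie_monomial q g -> inLieGen q g.
Proof.
case=> t + ->; elim: t => [u|t1 IH1 t2 IH2] /=.
  rewrite andbT => /eqP su; apply: LG_gen => w; rewrite /delta /=.
  by case: (w =P u) => // ->; rewrite su eqxx.
by rewrite all_cat => /andP[/IH1 ? /IH2 ?]; apply: LG_bracket.
Qed.

Lemma inLieGen_span_monomials q u : inLieGen q u -> tspan (lie_monomial q) u.
Proof.
elim=> {u} [u Hu|u v _ Hu _ Hv|c u _ Hu|u v _ Hu _ Hv].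
- have -> : u = (fun w => \sum_(b : q.-tuple 'I_n) u b * delta b w).
    apply: functional_extensionality => w.
    have [sw|sw] := boolP (size w == q); last first.
      rewrite Hu // big1 // => b _; rewrite /delta /=.
      by case: (w =P b) => [wb|_]; [rewrite wb size_tuple eqxx in sw | rewrite mulr0].
    rewrite (bigD1 (Tuple sw)) //= big1 ?addr0 /delta /= ?eqxx ?mulr1 // => b.
    by case: (w =P b) => [wb /eqP[]|_]; [apply: val_inj | rewrite mulr0].
  by apply: tspan_sum => b; exists (Leaf b); rewrite //= size_tuple eqxx.
- exact: tspanD.
- exact: tspanZ.
- apply: tspan_linear (tbracketl_linear v) _ Hu => _ [t1 H1 ->].
  rewrite tbracketC; apply: tspanZ.
  apply: tspan_linear (tbracketl_linear _) _ Hv => _ [t2 H2 ->].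
  by apply: tspan_gen; exists (Node t2 t1); rewrite //= all_cat H1 H2.
Qed.

Definition left_normed (a : seq 'I_n) (cs : seq (seq 'I_n)) : btree :=
  foldl (fun t c => Node t (Leaf c)) (Leaf a) cs.

Lemma leaves_left_normed a cs : leaves (left_normed a cs) = a :: cs.
Proof.
suff foldlE t : leaves (foldl (fun t c => Node t (Leaf c)) t cs) = leaves t ++ cs.
  by rewrite /left_normed foldlE.
by elim: cs t => [|c cs IH] t /=; rewrite ?cats0 // IH -catA.
Qed.

Lemma left_normed_rcons a cs c :
  left_normed a (rcons cs c) = Node (left_normed a cs) (Leaf c).
Proof. by rewrite /left_normed foldl_rcons. Qed.

Definition left_normed_with a L (g : tens) :=
  exists2 cs, perm_eq (a :: cs) L & g = beval (left_normed a cs).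

Lemma left_normed_with_perm a L L' g :
  perm_eq L L' -> left_normed_with a L g -> left_normed_with a L' g.
Proof. by move=> LL' [cs Lcs ->]; exists cs => //; apply: perm_trans LL'. Qed.

Lemma bracket_left_normed_span a cs t :
  tspan (left_normed_with a ((a :: cs) ++ leaves t))
    (tbracket (beval (left_normed a cs)) (beval t)).
Proof.
elim: t cs => [c|t1 IH1 t2 IH2] cs.
  apply: tspan_gen; exists (rcons cs c); first by rewrite /= cats1.
  by rewrite left_normed_rcons.
rewrite /= jacobi; apply: tspanD; last apply: tspanZ.
- apply: tspan_linear (tbracketl_linear _) _ (IH1 cs) => _ [cs' Lcs' ->].
  apply: tspan_sub (IH2 cs') => g; apply: left_normed_with_perm.
  by rewrite catA -cat_cons perm_cat2r.
- apply: tspan_linear (tbracketl_linear _) _ (IH2 cs) => _ [cs' Lcs' ->].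
  apply: tspan_sub (IH1 cs') => g; apply: left_normed_with_perm.
  apply: perm_trans (perm_cat Lcs' (perm_refl _)) _.
  by rewrite -catA -cat_cons perm_cat2l perm_catC.
Qed.

Lemma beval_span_left_normed t a :
  a \in leaves t -> tspan (left_normed_with a (leaves t)) (beval t).
Proof.
elim: t => [u|t1 IH1 t2 IH2] /=.
  by rewrite inE => /eqP ->; apply: tspan_gen; exists [::].
rewrite mem_cat; have [a1 _|_ /= a2] := boolP (a \in leaves t1).
  apply: tspan_linear (tbracketl_linear _) _ (IH1 a1) => _ [cs Lcs ->].
  apply: tspan_sub (bracket_left_normed_span a cs t2) => g.
  by apply: left_normed_with_perm; rewrite perm_cat2r.
rewrite tbracketC; apply: tspanZ.
apply: tspan_linear (tbracketl_linear _) _ (IH2 a2) => _ [cs Lcs ->].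
apply: tspan_sub (bracket_left_normed_span a cs t1) => g.
by apply: left_normed_with_perm; rewrite perm_catC perm_cat2l.
Qed.

Lemma beval_left_normed (z : 'I_n) q a cs w :
  all (fun c => size c == q) cs -> all (fun c => z \notin c) cs -> z \in take q w ->
  beval (left_normed a cs) w = delta (flatten (a :: cs)) w.
Proof.
elim/last_ind: cs w => [|cs c IH] w; first by rewrite /= cats0.
rewrite !all_rcons => /andP[/eqP sc sq] /andP[zc zcs] zw.
rewrite left_normed_rcons /= /tbracket.
have -> : tmul (beval (left_normed a cs)) (delta c) w =
    tmul (delta (flatten (a :: cs))) (delta c) w.
  apply: eq_bigr => i _; rewrite /delta /=.
  case: (drop i w =P c) => [dc|_]; last by rewrite !mulr0.
  congr (_ * _); apply: IH => //; rewrite -take_min.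
  case: (leqP q i) => // _.
  by move: (mem_take zw); rewrite -{1}(cat_take_drop i w) mem_cat dc (negbTE zc) orbF.
(* In the other product, the first factor [e_c] would have to cover the
   first q letters of w, which contain z. *)
have -> : tmul (delta c) (beval (left_normed a cs)) w = 0.
  rewrite /tmul big1 // => i _; rewrite /delta /=.
  case: (take i w =P c) => [tc|_]; last by rewrite mul0r.
  have tqc : take q w = c.
    move: (congr1 size tc); rewrite size_take sc -tc.
    by case: ltnP => [_ -> //|wi sw]; rewrite !take_oversize // sw.
  by rewrite -tqc zw in zc.
by rewrite subr0 tmul_delta -cats1 /= flatten_cat /= cats0 catA.
Qed.

End TensorAlgebra.

Section Weights.
Variable F : fieldType.
Hypothesis F_infinite : infinite_field F.

Lemma infinite_field_uniq_seq m : exists2 s : seq F, uniq s & size s = m.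
Proof.
elim: m => [|m [s us ss]]; first by exists [::].
have [x xs] := F_infinite s.
by exists (x :: s); rewrite /= ?xs ?us ?ss.
Qed.

Lemma infinite_field_sep_powers e1 e2 :
  e1 != e2 -> exists2 x : F, x != 0 & x ^+ e1 != x ^+ e2.
Proof.
wlog lt12 : e1 e2 / (e1 < e2)%N.
  move=> wlog; rewrite neq_ltn => /orP[lt12|lt21].
    by apply: wlog; rewrite // ltn_eqF.
  have [|x x0 xe] := wlog e2 e1 lt21; first by rewrite ltn_eqF.
  by exists x; rewrite // eq_sym.
have [s us ss] := infinite_field_uniq_seq e2.+2.
(* A non-root of X^(e2+1) - X^(e1+1) is automatically nonzero. *)
pose p : {poly F} := 'X^(e2.+1) - 'X^(e1.+1).
have sp : size p = e2.+2.
  by rewrite size_polyDl size_polyXn // size_polyN !size_polyXn !ltnS.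
have /hasP[x _ px] : has (fun x => ~~ root p x) s.
  apply: contraT => /hasPn rs; have /negP[] : ~~ (size s < size p)%N.
    by rewrite ss sp ltnn.
  apply: max_poly_roots us; last by apply/allP => x /rs /negPn.
  by rewrite -size_poly_eq0 sp.
exists x.
  by apply: contraNneq px => ->; rewrite rootE !hornerE !expr0n subrr.
by apply: contraNneq px => ex; rewrite rootE !hornerE !exprS ex subrr.
Qed.

Definition first_letters n m : seq 'I_n := [seq i <- enum 'I_n | (nat_of_ord i < m)%N].

Lemma uniq_first_letters n m : uniq (first_letters n m).
Proof. by rewrite filter_uniq ?enum_uniq. Qed.

Lemma mem_first_letters n m (a : 'I_n) : (a \in first_letters n m) = (a < m)%N.
Proof. by rewrite mem_filter mem_enum andbT. Qed.

Lemma omega_weight_support n m (M : tensor F n -> Prop) u w :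
  weight_space M (@omega n m) u -> u w != 0 -> perm_eq w (first_letters n m).
Proof.
case=> _ wu uw; apply/allP => a _ /=.
rewrite (count_uniq_mem _ (uniq_first_letters n m)) mem_first_letters.
apply: contraT => ne; have [x x0 xne] := infinite_field_sep_powers ne.
pose t i := if i == a then x else 1.
have t_neq0 i : t i != 0 by rewrite /t; case: (i =P a); rewrite ?oner_eq0.
have /(mulIf uw)/eqP := wu t t_neq0 w.
rewrite /diag_act -big_mkcond big_const_seq iter_mulr_1 (bigD1 a) //= /t eqxx.
rewrite big1 ?mulr1 => [|i /negbTE ->]; last exact: expr1n.
by move=> E; case/negP: xne.
Qed.

End Weights.

Lemma lift_perm_surj m (s : 'S_m.+1) i j :
  s i = j -> exists t, lift_perm i j t = s.
Proof.
move=> sij.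
pose unlift_fun (k : 'I_m) := odflt k (unlift j (s (lift i k))).
have unlift_funK k : lift j (unlift_fun k) = s (lift i k).
  rewrite /unlift_fun; have := neq_lift i k.
  by rewrite -(can_eq (permK s)) sij => /unlift_some[] ? ? ->.
have inj_unlift_fun : injective unlift_fun.
  by move=> k1 k2 /(congr1 (lift j)); rewrite !unlift_funK => /perm_inj/lift_inj.
exists (perm inj_unlift_fun); apply/permP => k.
case: (unliftP i k) => [k'|] ->; last by rewrite lift_perm_id.
by rewrite lift_perm_lift permE unlift_funK.
Qed.

Section Basis.
Variables (n q k m' : nat).
Hypotheses (q_gt0 : (0 < q)%N) (k_gt0 : (0 < k)%N).
Hypotheses (qk_eq : (q * k = m'.+1)%N) (m_le_n : (m'.+1 <= n)%N).
Local Notation m := m'.+1.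

Lemma q_le_m : (q <= m)%N.
Proof. by rewrite -qk_eq leq_pmulr. Qed.

Definition letter (i : 'I_m) : 'I_n := widen_ord m_le_n i.
Local Notation z := (letter ord0).

Lemma letter_inj : injective letter.
Proof. by move=> i j /(congr1 val) /= /val_inj. Qed.

Definition basis_index := ('I_q * 'S_m')%type.

Lemma card_basis_index : #|{: basis_index}| = ((q * k)`! %/ k)%N.
Proof. by rewrite card_prod card_ord card_Sn qk_eq factS -qk_eq mulnAC mulnK. Qed.

(* The word of (j, s) has the letter 1 (the index 0) in position j and the
   other letters in the order given by s. *)
Definition arrangement (x : basis_index) : 'S_m :=
  lift_perm (widen_ord q_le_m x.1) ord0 x.2.

Definition basis_word x : seq 'I_n := [seq letter (arrangement x i) | i <- enum 'I_m].

Lemma size_basis_word x : size (basis_word x) = m.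
Proof. by rewrite size_map size_enum_ord. Qed.

Lemma nth_basis_word x (i : 'I_m) : nth z (basis_word x) i = letter (arrangement x i).
Proof. by rewrite (nth_map ord0) ?size_enum_ord // nth_ord_enum. Qed.

Lemma perm_basis_word x : perm_eq (basis_word x) (first_letters n m).
Proof.
apply: uniq_perm; rewrite ?uniq_first_letters //.
  by rewrite map_inj_uniq ?enum_uniq // => i j /letter_inj/perm_inj.
move=> a; rewrite mem_first_letters.
apply/mapP/idP => [[i _ ->]|am]; first by rewrite /= ltn_ord.
exists ((arrangement x)^-1 (Ordinal am))%g; first exact: mem_enum.
by rewrite permKV; apply: val_inj.
Qed.

Lemma size_first_letters : size (first_letters n m) = m.
Proof. by rewrite -(perm_size (perm_basis_word (Ordinal q_gt0, 1%g))) size_basis_word. Qed.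

Lemma z_in_take_basis_word x : z \in take q (basis_word x).
Proof.
have -> : z = nth z (take q (basis_word x)) x.1.
  rewrite nth_take // -[nat_of_ord x.1]/(nat_of_ord (widen_ord q_le_m x.1)).
  by rewrite nth_basis_word /arrangement lift_perm_id.
by rewrite mem_nth // size_takel ?size_basis_word ?q_le_m.
Qed.

Lemma basis_word_inj : injective basis_word.
Proof.
move=> [j1 s1] [j2 s2] E.
have Es i : arrangement (j1, s1) i = arrangement (j2, s2) i.
  by apply: letter_inj; rewrite -!nth_basis_word E.
have Ej : j1 = j2.
  have := Es (widen_ord q_le_m j1); rewrite /arrangement /= lift_perm_id => /esym.
  rewrite -[X in _ = X](lift_perm_id (widen_ord q_le_m j2) ord0 s2) => /perm_inj.
  by move/(congr1 val) => /= /val_inj.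
subst j2; congr (_, _); apply/permP => i.
have := Es (lift (widen_ord q_le_m j1) i).
by rewrite /arrangement !lift_perm_lift => /lift_inj.
Qed.

Lemma basis_word_surj w :
  perm_eq w (first_letters n m) -> z \in take q w -> exists x, basis_word x = w.
Proof.
move=> wL zw.
have sw : size w = m by rewrite (perm_size wL) size_first_letters.
have uw : uniq w by rewrite (perm_uniq wL) uniq_first_letters.
have w_lt i : (i < m)%N -> (nth z w i < m)%N.
  by move=> im; rewrite -mem_first_letters -(perm_mem wL) mem_nth // sw.
pose f (i : 'I_m) : 'I_m := inord (nth z w i).
have f_inj : injective f.
  move=> i j /(congr1 val); rewrite /= !inordK ?w_lt // => /val_inj/eqP.
  by rewrite nth_uniq ?sw // => /eqP/val_inj.
have iq : (index z w < q)%N by rewrite -(in_take _ (mem_take zw)).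
pose j : 'I_q := Ordinal iq.
have [s sE] : exists s, lift_perm (widen_ord q_le_m j) ord0 s = perm f_inj.
  apply: lift_perm_surj; apply: val_inj.
  by rewrite permE /f /= nth_index ?(mem_take zw) // inordK.
exists (j, s); apply: (@eq_from_nth _ z); rewrite ?size_basis_word ?sw // => i im.
rewrite -[i]/(nat_of_ord (Ordinal im)) nth_basis_word /arrangement sE permE.
by apply: val_inj; rewrite /= inordK ?w_lt.
Qed.

Definition blocks (w : seq 'I_n) := reshape (nseq k.-1 q) (drop q w).

Lemma sumn_blocks_shape : sumn (nseq k.-1 q) = (m - q)%N.
Proof. by rewrite sumn_nseq -qk_eq -{2}(prednK k_gt0) mulnS addKn mulnC. Qed.

Lemma take_blocksK w : size w = m -> flatten (take q w :: blocks w) = w.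
Proof.
by move=> sw; rewrite /= reshapeKr ?cat_take_drop // size_drop sw sumn_blocks_shape.
Qed.

Lemma size_blocks w : size w = m -> all (fun c => size c == q) (blocks w).
Proof.
move=> sw; rewrite -(all_map size (pred1 q)) -/(shape _) reshapeKl.
  by rewrite all_nseq /= eqxx orbT.
by rewrite size_drop sw sumn_blocks_shape.
Qed.

Lemma z_notin_blocks x : all (fun c => z \notin c) (blocks (basis_word x)).
Proof.
have := perm_uniq (perm_basis_word x); rewrite uniq_first_letters.
rewrite -{1}(take_blocksK (size_basis_word x)) cat_uniq => /and3P[_ /hasPn zc _].
apply/allP => c cb; apply: contraL (z_in_take_basis_word x) => zinc.
by apply: zc; apply/flattenP; exists c.
Qed.

Variable F : fieldType.

Definition basis_vec x : tensor F n :=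
  beval F (left_normed (take q (basis_word x)) (blocks (basis_word x))).

Definition is_basis_vec (g : tensor F n) := exists x, g = basis_vec x.

Lemma basis_vec_word x y : basis_vec x (basis_word y) = (basis_word y == basis_word x)%:R.
Proof.
rewrite /basis_vec (beval_left_normed F _ (size_blocks (size_basis_word x))
  (z_notin_blocks x) (z_in_take_basis_word y)).
by rewrite take_blocksK ?size_basis_word.
Qed.

Lemma basis_vec_support x w : basis_vec x w != 0 -> perm_eq w (basis_word x).
Proof.
by move/beval_support; rewrite leaves_left_normed take_blocksK ?size_basis_word.
Qed.

Lemma basis_vec_inLieGen x : inLieGen q (basis_vec x).
Proof.
apply: lie_monomial_inLieGen.
exists (left_normed (take q (basis_word x)) (blocks (basis_word x))) => //.
rewrite leaves_left_normed /= size_blocks ?size_basis_word // andbT.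
by rewrite size_takel ?size_basis_word ?q_le_m.
Qed.

Lemma left_normed_basis_vec a cs :
  size a = q -> all (fun c => size c == q) cs -> z \in a ->
  perm_eq (flatten (a :: cs)) (first_letters n m) ->
  exists x, beval F (left_normed a cs) = basis_vec x.
Proof.
move=> sa scs za acsL.
have take_acs : take q (flatten (a :: cs)) = a by rewrite /= take_size_cat.
have [|x xE] := basis_word_surj acsL; first by rewrite take_acs.
exists x; rewrite /basis_vec xE take_acs; congr (beval F (left_normed a _)).
have shape_cs : shape cs = nseq (size cs) q.
  by rewrite -(size_map size) /shape; apply/all_pred1P; rewrite all_map.
have size_cs : size cs = k.-1.
  move: (perm_size acsL); rewrite size_first_letters /= size_cat size_flatten.
  rewrite shape_cs sumn_nseq sa -qk_eq -{1}(prednK k_gt0) mulnS.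
  by move=> /addnI/eqP; rewrite eqn_pmul2l // => /eqP.
by rewrite /blocks /= drop_size_cat // -size_cs -shape_cs flattenK.
Qed.

Definition omega_part (f : tensor F n) : tensor F n :=
  fun w => if perm_eq w (first_letters n m) then f w else 0.

Lemma omega_part_linear : tlinear omega_part.
Proof.
by split=> [|f g|c f]; apply: functional_extensionality => w;
  rewrite /omega_part /=; case: ifP; rewrite ?addr0 ?mulr0.
Qed.

Lemma omega_part_lie_monomial g :
  lie_monomial q g -> tspan is_basis_vec (omega_part g).
Proof.
case=> t sizes ->.
have [tL|tNL] := boolP (perm_eq (flatten (leaves t)) (first_letters n m)); last first.
  have -> : omega_part (beval F t) = \0.
    apply: functional_extensionality => w; rewrite /omega_part.
    case: ifPn => // wL; apply/eqP; apply: contraNT tNL => /beval_support wt.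
    by rewrite perm_sym in wt; apply: perm_trans wt wL.
  exact: tspan0.
have -> : omega_part (beval F t) = beval F t.
  apply: functional_extensionality => w; rewrite /omega_part.
  case: ifPn => // wNL; apply/esym/eqP; apply: contraNT wNL => /beval_support wt.
  exact: perm_trans wt tL.
have /flattenP[a a_t za] : z \in flatten (leaves t).
  by rewrite (perm_mem tL) mem_first_letters.
apply: tspan_trans (beval_span_left_normed F a_t) => _ [cs acs ->].
have := sizes; rewrite -(perm_all _ acs) /= => /andP[/eqP sa scs].
have [x ->] := left_normed_basis_vec sa scs za (perm_trans (perm_flatten acs) tL).
by apply: tspan_gen; exists x.
Qed.

Lemma basis_vec_schur x : schur_functor (q * k) (@LiePower F n q k) (basis_vec x).
Proof.
rewrite /schur_functor /weight_space /LiePower qk_eq; split; first split.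
- exact: basis_vec_inLieGen.
- move=> w; apply: contraNeq => /basis_vec_support xw.
  by rewrite (perm_size xw) size_basis_word.
- move=> t _ w; rewrite /diag_act.
  have [->|/basis_vec_support xw] := eqVneq (basis_vec x w) 0; first by rewrite !mulr0.
  congr (_ * _); rewrite (perm_big _ (perm_trans xw (perm_basis_word x))).
  rewrite big_filter big_enum_cond /= big_mkcond; apply: eq_bigr => i _.
  by rewrite /omega; case: ifP.
Qed.

Lemma basis_vec_free (c : 'I_#|{: basis_index}| -> F) :
  (forall w, lincomb c (fun i => basis_vec (enum_val i)) w = 0) -> forall i, c i = 0.
Proof.
move=> c0 i; have := c0 (basis_word (enum_val i)).
rewrite /lincomb (bigD1 i) //= basis_vec_word eqxx mulr1 big1 ?addr0 // => j ji.
rewrite basis_vec_word (inj_eq basis_word_inj) (inj_eq enum_val_inj).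
by rewrite eq_sym (negbTE ji) mulr0.
Qed.

Hypothesis F_infinite : infinite_field F.

Lemma schur_span_basis_vec u :
  schur_functor (q * k) (@LiePower F n q k) u -> tspan is_basis_vec u.
Proof.
move=> uW; have [[Lu _] _] := uW; rewrite qk_eq in uW.
have -> : u = omega_part u.
  apply: functional_extensionality => w; rewrite /omega_part; case: ifPn => // wNL.
  by apply/eqP; apply: contraNT wNL; apply: omega_weight_support uW.
apply: tspan_linear omega_part_linear _ (inLieGen_span_monomials Lu).
exact: omega_part_lie_monomial.
Qed.

Lemma has_dim_schur_LiePower :
  has_dim (schur_functor (q * k) (@LiePower F n q k)) #|{: basis_index}|.
Proof.
exists (fun i => basis_vec (enum_val i)); split; [|split].
- by move=> i; apply: basis_vec_schur.
- exact: basis_vec_free.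
- move=> u /schur_span_basis_vec uspan; apply: tspan_lincomb.
  by apply: tspan_sub uspan => _ [x ->]; exists (enum_rank x); rewrite enum_rankK.
Qed.

End Basis.

Theorem lemma3p3 (F : fieldType) (p : nat) (q k n : nat) :
  infinite_field F -> (p \in [pchar F])%R ->
  (0 < q)%N -> (0 < k)%N -> (q * k <= n)%N ->
  has_dim (schur_functor (q * k) (@LiePower F n q k)) ((q * k)`! %/ k).
Proof.
move=> F_infinite _ q_gt0 k_gt0 qk_le_n.
have qk_eq : (q * k = (q * k).-1.+1)%N by rewrite prednK // muln_gt0 q_gt0 k_gt0.
have m_le_n : ((q * k).-1.+1 <= n)%N by rewrite -qk_eq.
rewrite -(card_basis_index k_gt0 qk_eq).
exact: has_dim_schur_LiePower q_gt0 k_gt0 qk_eq m_le_n F F_infinite.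
Qed.
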